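(* Let $H$ be a tree and $Q$ a subtree of $H$ with at least one edge. Then $Q$ is a good subgraph of $H$ if and only if no vertex of $N_H[V_Q]$ is a leaf of $H$ and the subgraph of $H$ induced by $N_H[V_Q]$ is the corona of $Q$, that is, $N_H[V_Q]\cap L_H=\emptyset$ and $H[N_H[V_Q]]=Q\circ K_1$.
   Context: Graphs are finite. A leaf is a vertex of degree one; $L_H$ is the set of leaves of $H$; $N_H[X]$ is the closed neighborhood of a vertex set $X$. The corona $Q\circ K_1$ is obtained from $Q$ by attaching one pendant edge (to a new leaf) at each vertex of $Q$; the condition $H[N_H[V_Q]]=Q\circ K_1$ means that the subgraph induced by $N_H[V_Q]$ consists of $Q$ together with, for each vertex $v$ of $Q$, exactly one neighbor of $v$ outside $V_Q$, these neighbors being distinct and pairwise nonadjacent. Good subgraph: Let $Q$ be a subgraph of $H$ without isolated vertices, and $E_Q^-$ the set of edges of $H$ not in $Q$ incident with at least one vertex of $Q$. $Q$ is a good subgraph of $H$ if there exist a set of edges $E$ with $E_Q^-\subseteq E\subseteq E_H\setminus E_Q$ and an orientation $A_E$ of the edges of $E$ (where $d^+(x)$, $d^-(x)$ denote the numbers of arcs of $A_E$ leaving, resp. entering $x$, and $d_H(x)$ is the degree in $H$) such that the arcs of $A_E$ form a family $\mathcal P=\{P_x: x\in V_Q\}$ of oriented paths indexed by the vertices of $Q$ with: (i) every vertex $v$ of $Q$ is the initial vertex of exactly one path of $\mathcal P$, and $d^+(v)=1$, $d^-(v)=d_H(v)-d_Q(v)-1$; (ii) if $x$ is an inner vertex of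 a path of $\mathcal P$, then $d^+(x)=1$ and $d^-(x)=d_H(x)-1$; (iii) if $x$ is an end vertex of a path of $\mathcal P$, then $d^-(x)<d_H(x)$. *)

(* Simple graphs on a finType T as symmetric irreflexive
   relations e; edges are 2-element sets [set x; y]. *)
From mathcomp Require Import all_boot.
Set Implicit Arguments. Unset Strict Implicit. Unset Printing Implicit Defensive.

Section Defs.
Variable T : finType.

Definition connected_on (V : {set T}) (adj : rel T) : Prop :=
  forall x y, x \in V -> y \in V ->
    exists p : seq T, [&& path adj x p, last x p == y & all (fun z => z \in V) p].

Definition acyclic_on (V : {set T}) (adj : rel T) : Prop :=
  ~ exists c : seq T,
      [&& 2 < size c, uniq c, all (fun z => z \in V) c & cycle adj c].

Definition is_tree (V : {set T}) (adj : rel T) : Prop :=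
  connected_on V adj /\ acyclic_on V adj.

Definition adjE (EQ : {set {set T}}) : rel T := fun x y => [set x; y] \in EQ.

Definition is_subtree (e : rel T) (VQ : {set T}) (EQ : {set {set T}}) : Prop :=
  [/\ forall s, s \in EQ ->
        exists x y, [/\ e x y, x \in VQ, y \in VQ & s = [set x; y]],
      is_tree VQ (adjE EQ) & EQ != set0].

Definition deg (e : rel T) (x : T) : nat := #|[set y | e x y]|.
Definition degE (EQ : {set {set T}}) (x : T) : nat := #|[set y | adjE EQ x y]|.
Definition outdeg (A : rel T) (x : T) : nat := #|[set y | A x y]|.
Definition indeg (A : rel T) (x : T) : nat := #|[set y | A y x]|.

Definition leaf (e : rel T) (x : T) : bool := deg e x == 1.

Definition closed_nbhd (e : rel T) (V : {set T}) : {set T} :=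
  V :|: [set y | [exists x in V, e x y]].

Definition arc_in (u w : T) (s : seq T) : Prop :=
  exists s1 s2, s = s1 ++ u :: w :: s2.

Definition inner (y : T) (s : seq T) : Prop :=
  exists s1 s2, [/\ s1 != [::], s2 != [::] & s = s1 ++ y :: s2].

(* Good subgraph. The orientation A_E is the arc relation A (E is the set of
   edges {x,y} with A x y or A y x); P x is the oriented path x :: P x. *)
Definition good_subgraph (e : rel T) (VQ : {set T}) (EQ : {set {set T}}) : Prop :=
  exists (A : rel T) (P : T -> seq T),
  [/\
      forall x y, A x y -> e x y && ([set x; y] \notin EQ),
      forall x y, ~~ (A x y && A y x) &
      forall x y, e x y -> [set x; y] \notin EQ -> (x \in VQ) || (y \in VQ) ->
        A x y || A y x] /\
  [/\
      forall x, x \in VQ -> [&& P x != [::], path A x (P x) & uniq (x :: P x)],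
      forall u w, A u w -> exists2 x, x \in VQ & arc_in u w (x :: P x) &

      forall v, v \in VQ -> outdeg A v = 1 /\ indeg A v = deg e v - degE EQ v - 1] /\
  [/\
      forall x y, x \in VQ -> inner y (x :: P x) ->
        outdeg A y = 1 /\ indeg A y = deg e y - 1 &
      forall x y, x \in VQ -> (y == x) || (y == last x (P x)) ->
        indeg A y < deg e y].

(* H[N_H[VQ]] = Q o K1, written out literally *)
Definition corona_induced (e : rel T) (VQ : {set T}) (EQ : {set {set T}}) : Prop :=
  [/\
      forall x y, x \in VQ -> y \in VQ -> e x y -> [set x; y] \in EQ,
      forall v, v \in VQ -> #|[set w | e v w & w \notin VQ]| = 1,
      forall v v' w, v \in VQ -> v' \in VQ -> w \notin VQ -> e v w -> e v' w -> v = v' &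
      forall u w, u \in closed_nbhd e VQ -> w \in closed_nbhd e VQ ->
        u \notin VQ -> w \notin VQ -> ~~ e u w].

End Defs.

From mathcomp Require Import all_boot zify.
Set Implicit Arguments. Unset Strict Implicit. Unset Printing Implicit Defensive.

(* An orientation of a tree has no directed cycles, so its directed paths are simple.
   In a good subgraph, a vertex outside V_Q with an outgoing arc is an inner or final
   vertex of some path P_x starting in V_Q, hence has an incoming arc; walking arcs
   backwards from an arc that enters V_Q from outside therefore ends in V_Q, and yields a
   path between two vertices of Q through vertices outside Q, which closes a cycle with Q.
   So the arcs leaving v in V_Q are exactly its edges to the outside, condition (i) leaves
   exactly one of them, and the rest of the corona structure is forced by acyclicity;
   leaves are excluded by (i) on V_Q and by (iii) or a continuing path next to V_Q.
   Conversely, orienting each edge from V_Q to the unique outside neighbour and taking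
   these single arcs as the paths gives a good subgraph, the absence of leaves being
   exactly what (iii) needs at the path ends. *)

Section Paths.
Variables (T : finType) (A : rel T).

Lemma arc_in_path u w x s : path A x s -> arc_in u w (x :: s) -> A u w.
Proof.
move=> hp [s1 [s2 hs]]; move: hs hp; case: s1 => [|z s1] [-> ->] /=; first by case/andP.
by rewrite cat_path => /andP[_] /= /andP[_] /andP[].
Qed.

Hypothesis path_uniq : forall x s, path A x s -> uniq (x :: s).

Lemma backward_exit (X : pred T) y :
  (forall z, X z -> exists z', A z' z) -> X y ->
  exists z s, [/\ ~~ X z, path A z s, last z s = y & all X s].
Proof.
move=> hpred hy.
suff main s z : X z -> all X s -> path A z s -> last z s = y ->
    exists z' s', [/\ ~~ X z', path A z' s', last z' s' = y & all X s'].
  exact: (main [::] y).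
have [n] := ubnP (#|T| - size s); elim: n s z => // n IH s z hn hz hs hp hl.
have [z' hz'z] := hpred z hz.
have [hXz'|] := boolP (X z'); last by exists z', (z :: s); rewrite /= hz'z hz hs hp.
apply: (IH (z :: s) z') => //=; last by rewrite hz'z hp.
- have /= hlt : size (z' :: z :: s) <= #|T|.
    by apply/card_geqP; exists (z' :: z :: s); split=> //; apply: path_uniq; rewrite /= hz'z.
  by rewrite subnS -ltnS prednK // subn_gt0 (ltnW hlt).
- by rewrite hz hs.
Qed.

End Paths.

Definition out_nbrs (T : finType) (e : rel T) (V : {set T}) (v : T) : {set T} :=
  [set w | e v w & w \notin V].

Section Tree.
Variables (T : finType) (e : rel T).
Hypotheses (e_sym : symmetric e) (e_irr : irreflexive e).
Hypothesis e_acyclic : acyclic_on [set: T] e.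

Lemma deg_gt1 x a b : e x a -> e x b -> a != b -> 1 < deg e x.
Proof.
move=> hxa hxb hab; have <- : #|[set a; b]| = 2 by rewrite cards2 hab.
by apply/subset_leq_card/subsetP => y; rewrite !inE => /orP[] /eqP ->.
Qed.

Section Orientation.
Variable A : rel T.
Hypotheses (A_sub : subrel A e) (A_antisym : forall x y, ~~ (A x y && A y x)).

Lemma oriented_cycle_free x s : path A x s -> uniq (x :: s) -> ~~ A (last x s) x.
Proof.
case: s => [|y [|z s]].
- by move=> _ _; apply/negP => /A_sub; rewrite e_irr.
- by rewrite /= andbT => hxy _; move: (A_antisym x y); rewrite hxy.
- move=> hp hu; apply/negP => hl; apply: e_acyclic; exists [:: x, y, z & s].
  apply/and4P; split=> //; first exact/allP.
  rewrite /cycle rcons_path (sub_path A_sub hp); exact: A_sub hl.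
Qed.

Lemma oriented_path_uniq x s : path A x s -> uniq (x :: s).
Proof.
elim: s x => // y s IH x hxp; have /andP[hxy hp] : A x y && path A y s := hxp.
have hu := IH y hp; rewrite cons_uniq hu andbT inE negb_or; apply/andP; split.
  by apply: contraTneq hxy => ->; apply/negP => /A_sub; rewrite e_irr.
apply/negP => /splitPr hxs; case: hxs hp hu => s1 s2.
rewrite cat_path -cat_cons cat_uniq => /andP[hp1 /= /andP[hl _]] /and3P[hu1 hdisj _].
have hx : x \notin y :: s1 by apply: contra hdisj => hx; rewrite /= hx.
move: hl; apply/negP/(oriented_cycle_free (x := x) (s := y :: s1)); first by rewrite /= hxy.
by rewrite /= hx.
Qed.

End Orientation.

Lemma acyclic_no_detour (e' : rel T) (V : {set T}) u v r :
  symmetric e' -> subrel e' e -> connected_on V e' -> u \in V -> v \in V ->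
  path e u (rcons r v) -> all [predC V] r -> uniq (u :: rcons r v) ->
  r = [::] /\ e' u v.
Proof.
move=> e'_sym e'_sub hconn hu hv hp hr huq.
have [p /and3P[hvp /eqP hl hpV]] := hconn v u hv hu.
case: (shortenP hvp) hl => p' hp' hu' hsub hl.
have huv : u != v by apply: contraTneq huq => ->; rewrite /= mem_rcons inE eqxx.
case/lastP: p' hp' hu' hsub hl => [|q z] hp' hu' hsub.
  by move=> /= hvu; rewrite hvu eqxx in huv.
rewrite last_rcons => hz; subst z.
have hqV z : z \in q -> z \in V.
  by move=> hz; apply: (allP hpV); apply: hsub; rewrite mem_rcons inE hz orbT.
have [|hrq] := boolP (nilp (r ++ q)).
  rewrite cat_nilp => /andP[/nilP-> /nilP hq]; subst q.
  by split=> //; rewrite e'_sym; case/andP: hp'.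
exfalso; apply: e_acyclic; exists (u :: rcons r v ++ q); apply/and4P; split.
- by move: hrq; rewrite /nilp /= !size_cat size_rcons; lia.
- rewrite -cat_cons cat_uniq huq /=.
  move: hu'; rewrite /= rcons_uniq mem_rcons inE negb_or => /and3P[/andP[_ hvq] huq' ->].
  rewrite andbT; apply/hasPn => z hz; rewrite inE mem_rcons inE !negb_or.
  apply/and3P; split.
  + by apply: contraNneq huq' => <-.
  + by apply: contraNneq hvq => <-.
  + by apply/negP => /(allP hr); rewrite inE hqV.
- exact/allP.
- rewrite /cycle rcons_cat cat_path hp last_rcons /=.
  exact: sub_path e'_sub _ _ hp'.
Qed.

Section Subtree.
Variables (VQ : {set T}) (EQ : {set {set T}}).
Hypothesis hQ : is_subtree e VQ EQ.

Lemma subtree_edge x y : [set x; y] \in EQ -> [/\ x \in VQ, y \in VQ & e x y].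
Proof.
case: hQ => hE _ _ /hE[a [b [hab ha hb hs]]].
have /set2P[] : x \in [set a; b] by rewrite -hs set21.
all: have /set2P[] : y \in [set a; b] by rewrite -hs set22.
all: move=> ? ?; subst x y; split; rewrite // 1?e_sym //.
- have : b \in [set a; a] by rewrite hs set22.
  by rewrite !inE orbb => /eqP hba; rewrite hba e_irr in hab.
- have : a \in [set b; b] by rewrite hs set21.
  by rewrite !inE orbb => /eqP hab'; rewrite hab' e_irr in hab.
Qed.

Lemma subtree_edge_out v w : w \notin VQ -> [set v; w] \notin EQ.
Proof. by apply: contra => /subtree_edge[]. Qed.

Lemma adjE_sym : symmetric (adjE EQ).
Proof. by move=> x y; rewrite /adjE setUC. Qed.

Lemma adjE_sub : subrel (adjE EQ) e.
Proof. by move=> x y /subtree_edge[]. Qed.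

Lemma subtree_nbr v : v \in VQ -> exists w, adjE EQ v w.
Proof.
case: hQ => hE [hconn _] /set0Pn[s hs] hv; have [a [b [_ ha _ hab]]] := hE s hs.
have [->|hva] := eqVneq v a; first by exists b; rewrite /adjE -hab.
have [[|w p] /and3P[hp hl _]] := hconn v a hv ha; first by move: hl; rewrite /= (negbTE hva).
by exists w; case/andP: hp.
Qed.

Lemma subtree_no_detour u v r : u \in VQ -> v \in VQ ->
  path e u (rcons r v) -> all [predC VQ] r -> uniq (u :: rcons r v) ->
  r = [::] /\ adjE EQ u v.
Proof. by case: hQ => _ [hconn _] _; exact: acyclic_no_detour adjE_sym adjE_sub hconn. Qed.

Lemma subtree_induced x y : x \in VQ -> y \in VQ -> e x y -> [set x; y] \in EQ.
Proof.
move=> hx hy hxy; have hneq : x != y by apply: contraTneq hxy => ->; rewrite e_irr.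
by have [] := subtree_no_detour (r := [::]) hx hy; rewrite //= ?hxy // inE hneq.
Qed.

Lemma out_nbr_unique v v' w : v \in VQ -> v' \in VQ -> w \notin VQ ->
  e v w -> e v' w -> v = v'.
Proof.
move=> hv hv' hw hvw hv'w; apply/eqP/contraT => hne.
have hwv : w != v by apply: contraNneq hw => ->.
have hwv' : w != v' by apply: contraNneq hw => ->.
have [] // := subtree_no_detour (r := [:: w]) hv hv'.
- by rewrite /= hvw e_sym hv'w.
- by rewrite /= hw.
- by rewrite /= !inE !negb_or hne eq_sym hwv hwv'.
Qed.

Lemma out_nbrs_nonadj u w : u \in closed_nbhd e VQ -> w \in closed_nbhd e VQ ->
  u \notin VQ -> w \notin VQ -> ~~ e u w.
Proof.
rewrite !inE => + + hu hw; rewrite (negbTE hu) (negbTE hw) /=.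
move=> /existsP[a /andP[ha hau]] /existsP[b /andP[hb hbw]]; apply/negP => huw.
have hau' : a != u by apply: contraNneq hu => <-.
have haw : a != w by apply: contraNneq hw => <-.
have hub : u != b by apply: contraNneq hu => ->.
have hwb : w != b by apply: contraNneq hw => ->.
have huw' : u != w by apply: contraTneq huw => ->; rewrite e_irr.
have [hab|hab] := eqVneq a b.
  subst b; apply: e_acyclic; exists [:: a; u; w].
  by rewrite /= hau huw (e_sym w) hbw !inE !negb_or hau' haw huw'.
have [] // := subtree_no_detour (r := [:: u; w]) ha hb.
- by rewrite /= hau huw (e_sym w) hbw.
- by rewrite /= hu hw.
- by rewrite /= !inE !negb_or hau' haw hab huw' hub hwb.
Qed.

Lemma corona_induced_of_out_nbrs :
  (forall v, v \in VQ -> #|out_nbrs e VQ v| = 1) -> corona_induced e VQ EQ.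
Proof.
by split; [exact: subtree_induced | | exact: out_nbr_unique | exact: out_nbrs_nonadj].
Qed.

Section GoodSubgraph.
Variables (A : rel T) (P : T -> seq T).
Hypothesis A_E : forall x y, A x y -> e x y && ([set x; y] \notin EQ).
Hypothesis A_antisym : forall x y, ~~ (A x y && A y x).
Hypothesis A_covers : forall x y, e x y -> [set x; y] \notin EQ ->
  (x \in VQ) || (y \in VQ) -> A x y || A y x.
Hypothesis P_path : forall x, x \in VQ ->
  [&& P x != [::], path A x (P x) & uniq (x :: P x)].
Hypothesis A_on_P : forall u w, A u w -> exists2 x, x \in VQ & arc_in u w (x :: P x).
Hypothesis outdeg_start : forall v, v \in VQ -> outdeg A v = 1.
Hypothesis indeg_ends : forall x y, x \in VQ -> (y == x) || (y == last x (P x)) ->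
  indeg A y < deg e y.

Lemma A_sub : subrel A e.
Proof. by move=> x y /A_E/andP[]. Qed.

Lemma arc_pred h w : h \notin VQ -> A h w -> exists p, A p h.
Proof.
move=> hh /A_on_P[x hx [s1 [s2 hs]]].
case/lastP: s1 hs => [[hxh _]|s1 p hs]; first by rewrite -hxh hx in hh.
exists p; apply: (arc_in_path (x := x) (s := P x)); first by case/and3P: (P_path hx).
by exists s1, (w :: s2); rewrite hs cat_rcons.
Qed.

Lemma no_arc_into_subtree w v : v \in VQ -> w \notin VQ -> ~~ A w v.
Proof.
move=> hv hw; apply/negP => hwv.
pose X h := (h \notin VQ) && [exists n, A h n].
have hX z : X z -> exists z', A z' z by case/andP=> hz /existsP[n]; exact: arc_pred.
have hXw : X w by rewrite /X hw; apply/existsP; exists v.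
have [z [s [hz hp hl hs]]] := backward_exit (oriented_path_uniq A_sub A_antisym) hX hXw.
case: s hp hl hs => [_ /= hzw _|y s hp hl hs]; first by rewrite hzw hXw in hz.
have hzQ : z \in VQ.
  by apply: contraNT hz => hzQ; rewrite /X hzQ; apply/existsP; exists y; case/andP: hp.
have hpv : path A z (rcons (y :: s) v) by rewrite rcons_path hp hl.
have hpv_uniq := oriented_path_uniq A_sub A_antisym hpv.
have [] // := subtree_no_detour hzQ hv (sub_path A_sub hpv) _ hpv_uniq.
by apply: sub_all hs => x /andP[].
Qed.

Lemma out_nbrs_arcs v : v \in VQ -> out_nbrs e VQ v = [set w | A v w].
Proof.
move=> hv; apply/setP => w; rewrite !inE; apply/andP/idP => [[hvw hw]|hvw].
  have /orP[//|hwv] := A_covers hvw (subtree_edge_out v hw) (introT orP (or_introl hv)).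
  by rewrite (negbTE (no_arc_into_subtree hv hw)) in hwv.
have /andP[he hn] := A_E hvw; split=> //.
by apply: contra hn => hw; exact: subtree_induced.
Qed.

Lemma subtree_not_leaf x : x \in VQ -> ~~ leaf e x.
Proof.
move=> hx; have [y hxy] := subtree_nbr hx.
have /eqP/cards1P[w hw] := outdeg_start hx.
have hxw : A x w by have := set11 w; rewrite -hw inE.
rewrite /leaf gtn_eqF // (deg_gt1 (adjE_sub hxy) (A_sub hxw)) //.
by apply: contraTneq hxy => ->; case/andP: (A_E hxw).
Qed.

Lemma out_nbr_not_leaf v x : v \in VQ -> x \notin VQ -> e v x -> ~~ leaf e x.
Proof.
move=> hv hx hvx; rewrite /leaf gtn_eqF //.
have : x \in out_nbrs e VQ v by rewrite inE hvx.
rewrite out_nbrs_arcs // inE => hvx'.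
have [y hy [s1 [s2 hs]]] := A_on_P hvx'.
case: s2 hs => [|t s2] hs.
  have hl : x = last y (P y) by move/(congr1 (last y)): hs; rewrite last_cat.
  have := indeg_ends hy (introT orP (or_intror (introT eqP hl))).
  apply: leq_trans; rewrite ltnS /indeg card_gt0; apply/set0Pn; exists v; rewrite inE.
  exact hvx'.
have hxt : A x t.
  apply: (arc_in_path (x := y) (s := P y)); first by case/and3P: (P_path hy).
  by exists (rcons s1 v), s2; rewrite hs cat_rcons.
apply: (deg_gt1 (a := v) (b := t)); [by rewrite e_sym | exact: A_sub hxt |].
by apply: contraTneq hxt => <-; apply/negP => hxv; move: (A_antisym v x); rewrite hvx' hxv.
Qed.

Lemma closed_nbhd_no_leaf x : x \in closed_nbhd e VQ -> ~~ leaf e x.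
Proof.
rewrite !inE => /orP[|/existsP[v /andP[hv hvx]]]; first exact: subtree_not_leaf.
have [hx|hx] := boolP (x \in VQ); first exact: subtree_not_leaf.
exact: out_nbr_not_leaf hv hx hvx.
Qed.

Lemma good_corona_induced : corona_induced e VQ EQ.
Proof.
by apply: corona_induced_of_out_nbrs => v hv; rewrite out_nbrs_arcs //; exact: outdeg_start.
Qed.

End GoodSubgraph.

Lemma good_subgraph_corona : good_subgraph e VQ EQ ->
  (forall x, x \in closed_nbhd e VQ -> ~~ leaf e x) /\ corona_induced e VQ EQ.
Proof.
case=> A [P [[A_E A_antisym A_covers] [[P_path A_on_P P_start] [_ P_ends]]]].
have outdeg_start v : v \in VQ -> outdeg A v = 1 by case/P_start.
split.
  exact: closed_nbhd_no_leaf A_E A_antisym A_covers P_path A_on_P outdeg_start P_ends.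
exact: good_corona_induced A_E A_antisym A_covers P_path A_on_P outdeg_start.
Qed.

Section Corona.
Hypothesis no_leaf : forall x, x \in closed_nbhd e VQ -> ~~ leaf e x.
Hypothesis Q_induced : forall x y, x \in VQ -> y \in VQ -> e x y -> [set x; y] \in EQ.
Hypothesis out_nbrs1 : forall v, v \in VQ -> #|out_nbrs e VQ v| = 1.
Hypothesis out_nbr_inj : forall v v' w, v \in VQ -> v' \in VQ -> w \notin VQ ->
  e v w -> e v' w -> v = v'.

Definition corona_arc : rel T := fun x y => (x \in VQ) && (y \in out_nbrs e VQ x).

Definition corona_path (x : T) : seq T := enum (out_nbrs e VQ x).

Lemma corona_pathE v : v \in VQ ->
  exists2 w, out_nbrs e VQ v = [set w] & corona_path v = [:: w].
Proof.
move=> hv; have /eqP/cards1P[w hw] := out_nbrs1 hv.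
by exists w; rewrite // /corona_path hw enum_set1.
Qed.

Lemma corona_indeg_subtree v : v \in VQ -> indeg corona_arc v = 0.
Proof.
move=> hv; apply/eqP; rewrite cards_eq0; apply/eqP/setP => u.
by rewrite !inE /corona_arc inE hv !andbF.
Qed.

Lemma corona_indeg_le1 w : indeg corona_arc w <= 1.
Proof.
apply/card_le1_eqP => u u'; rewrite !inE /corona_arc !inE.
by move=> /and3P[hu huw hw] /and3P[hu' hu'w _]; exact: out_nbr_inj hu' hu hw hu'w huw.
Qed.

Lemma corona_deg v : v \in VQ -> deg e v <= (degE EQ v).+1.
Proof.
move=> hv; rewrite -addn1 -(out_nbrs1 hv) /deg /degE.
apply: leq_trans (leq_card_setU _ _); apply/subset_leq_card/subsetP => y.
rewrite !inE => hvy; have [hy|hy] := boolP (y \in VQ); last by rewrite hvy orbT.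
by rewrite /adjE Q_induced.
Qed.

Lemma out_nbr_deg v w : v \in VQ -> w \in out_nbrs e VQ v -> 1 < deg e w.
Proof.
move=> hv hw; move: hw (hw); rewrite inE => /andP[hvw _] hw.
have : ~~ leaf e w.
  by apply: no_leaf; rewrite !inE; apply/orP; right; apply/existsP; exists v; rewrite hv.
have : 0 < deg e w by rewrite /deg card_gt0; apply/set0Pn; exists v; rewrite inE e_sym.
by rewrite /leaf; case: (deg e w) => [|[|]].
Qed.

Lemma corona_good_subgraph : good_subgraph e VQ EQ.
Proof.
exists corona_arc, corona_path; split; [split|split; [split|split]].
- move=> x y /andP[_]; rewrite inE => /andP[-> /(subtree_edge_out x) ->] //.
- move=> x y; rewrite /corona_arc !inE.
  by case: (x \in VQ); case: (y \in VQ); rewrite ?andbF.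
- move=> x y hxy hEQ; rewrite /corona_arc !inE hxy (e_sym y x) hxy.
  case hx: (x \in VQ); case hy: (y \in VQ) => //= _.
  by rewrite Q_induced in hEQ.
- move=> x hx; have [w hw ->] := corona_pathE hx.
  have : w \in out_nbrs e VQ x by rewrite hw set11.
  rewrite inE => /andP[_ hwQ]; rewrite /= /corona_arc hx hw set11 /= inE andbT.
  by apply: contraNneq hwQ => <-.
- move=> u w /[dup] huw /andP[hu hw]; exists u => //.
  have [w' hw' hp] := corona_pathE hu; move: hw; rewrite hw' inE => /eqP ->.
  by exists [::], [::]; rewrite hp.
- move=> v hv; split.
    by rewrite /outdeg -(out_nbrs1 hv); apply: eq_card => w; rewrite !inE /corona_arc hv inE.
  rewrite corona_indeg_subtree //; apply/esym/eqP.
  by rewrite subn_eq0 leq_subLR addn1 corona_deg.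
- move=> x y hx [s1 [s2 [hs1 hs2]]]; have [w _ ->] := corona_pathE hx.
  case: s1 hs1 => [|a [|c s1]] // _ [_]; first by case: s2 hs2 => // ? ? _ [].
  by case: s1.
- move=> x y hx; have [w hw hp] := corona_pathE hx.
  have hxw : w \in out_nbrs e VQ x by rewrite hw set11.
  rewrite hp => /orP[/eqP->|/eqP->].
    rewrite corona_indeg_subtree // /deg card_gt0; apply/set0Pn; exists w.
    by move: hxw; rewrite !inE => /andP[].
  exact: leq_ltn_trans (corona_indeg_le1 w) (out_nbr_deg hx hxw).
Qed.

End Corona.

End Subtree.

End Tree.

Theorem proposition7p3 (T : finType) (e : rel T) (VQ : {set T}) (EQ : {set {set T}}) :
  symmetric e -> irreflexive e ->
  is_tree [set: T] e -> is_subtree e VQ EQ ->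
  good_subgraph e VQ EQ <->
  ((forall x, x \in closed_nbhd e VQ -> ~~ leaf e x) /\ corona_induced e VQ EQ).
Proof.
move=> e_sym e_irr [_ e_acyclic] hQ; split; first exact: good_subgraph_corona.
by case=> no_leaf [Q_induced out_nbrs1 out_nbr_inj _]; exact: corona_good_subgraph.
Qed.
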